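(* Let $\mathcal{C}$ be a category with finite coproducts. The semifree functor $(-)^{\mathrm{s}}:\mathbf{Mon}(\mathcal{C})\to\mathbf{Mon}(\mathcal{C})$ together with the transformations $\epsilon$ and $\delta$ defined, for a monad $(M,\eta,\mu)$ and object $X$, by $\epsilon_{M,X}=[\eta_X,\mathrm{id}_{MX}]:X+MX\to MX$ and $\delta_{M,X}=\mathrm{id}_X+\mathrm{inr}^{X+MX}:X+MX\to X+(X+MX)$, is a comonad on $\mathbf{Mon}(\mathcal{C})$.
   Context: $\mathbf{Mon}(\mathcal{C})$ is the category of monads on $\mathcal{C}$ and monad morphisms. For a monad $(M,\eta,\mu)$, the semifree monad is $M^{\mathrm{s}}=\mathrm{Id}+M$ with unit $\eta^{\mathrm{s}}=\mathrm{inl}$ and multiplication $\mu^{\mathrm{s}}=[\mathrm{id}_{\mathrm{Id}+M},\ \mathrm{inr}\circ\mu\circ M[\eta,\mathrm{id}_M]]$; on a monad morphism $\sigma:M\Rightarrow T$, $(\sigma^{\mathrm{s}})_X=\mathrm{id}_X+\sigma_X$. Note $(M^{\mathrm{s}})^{\mathrm{s}}X=X+(X+MX)$. *)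

Set Implicit Arguments.
Set Universe Polymorphism.

Record Category := {
  Ob :> Type;
  Hom : Ob -> Ob -> Type;
  idm : forall A, Hom A A;
  comp : forall A B C, Hom B C -> Hom A B -> Hom A C;
  comp_id_l : forall A B (f : Hom A B), comp (idm B) f = f;
  comp_id_r : forall A B (f : Hom A B), comp f (idm A) = f;
  comp_assoc : forall A B C D (h : Hom C D) (g : Hom B C) (f : Hom A B),
      comp h (comp g f) = comp (comp h g) f
}.
Arguments Hom {c} _ _.
Arguments idm {c} _.
Arguments comp {c A B C} _ _.
Notation "g \o f" := (comp g f) (at level 40, left associativity).

Record FinCoproducts (C : Category) := {
  cp : C -> C -> C;
  cinl : forall A B : C, Hom A (cp A B);
  cinr : forall A B : C, Hom B (cp A B);
  copair : forall (A B Z : C), Hom A Z -> Hom B Z -> Hom (cp A B) Z;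
  copair_inl : forall A B Z (f : Hom A Z) (g : Hom B Z), copair A B Z f g \o cinl A B = f;
  copair_inr : forall A B Z (f : Hom A Z) (g : Hom B Z), copair A B Z f g \o cinr A B = g;
  copair_unique : forall A B Z (f : Hom A Z) (g : Hom B Z) (h : Hom (cp A B) Z),
      h \o cinl A B = f -> h \o cinr A B = g -> h = copair A B Z f g;
  init : C;
  init_mor : forall Z : C, Hom init Z;
  init_unique : forall Z (h : Hom init Z), h = init_mor Z
}.
Arguments cp {C} _ _ _.
Arguments cinl {C} _ _ _.
Arguments cinr {C} _ _ _.
Arguments copair {C} _ {A B Z} _ _.

Section Mon.
Variable C : Category.
Variable K : FinCoproducts C.

Definition cpmap (A B A' B' : C) (f : Hom A A') (g : Hom B B') : Hom (cp K A B) (cp K A' B') :=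
  copair K (cinl K A' B' \o f) (cinr K A' B' \o g).
Arguments cpmap {A B A' B'} _ _.

Record MonadData := {
  mobj :> C -> C;
  mmap : forall X Y : C, Hom X Y -> Hom (mobj X) (mobj Y);
  munit : forall X : C, Hom X (mobj X);
  mmult : forall X : C, Hom (mobj (mobj X)) (mobj X)
}.
Arguments mmap _ {X Y} _.

Definition is_monad (M : MonadData) : Prop :=
  (forall X : C, mmap M (idm X) = idm (M X)) /\
  (forall X Y Z (f : Hom X Y) (g : Hom Y Z), mmap M (g \o f) = mmap M g \o mmap M f) /\
  (forall X Y (f : Hom X Y), mmap M f \o munit M X = munit M Y \o f) /\
  (forall X Y (f : Hom X Y), mmap M f \o mmult M X = mmult M Y \o mmap M (mmap M f)) /\
  (forall X, mmult M X \o munit M (M X) = idm (M X)) /\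
  (forall X, mmult M X \o mmap M (munit M X) = idm (M X)) /\
  (forall X, mmult M X \o mmult M (M X) = mmult M X \o mmap M (mmult M X)).

Definition is_monad_morphism (M T : MonadData) (s : forall X : C, Hom (M X) (T X)) : Prop :=
  (forall X Y (f : Hom X Y), mmap T f \o s X = s Y \o mmap M f) /\
  (forall X, s X \o munit M X = munit T X) /\
  (forall X, s X \o mmult M X = mmult T X \o (mmap T (s X) \o s (M X))).

(** A comonad on Mon(C), given by an endofunctor (F, Fmor) on Mon(C),
    counit eps and comultiplication delta; morphisms of Mon(C) are compared
    componentwise. *)
Definition is_Mon_comonad
  (F : MonadData -> MonadData)
  (Fmor : forall M T : MonadData, (forall X : C, Hom (M X) (T X)) ->
            forall X : C, Hom (F M X) (F T X))
  (eps : forall (M : MonadData) (X : C), Hom (F M X) (M X))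
  (delta : forall (M : MonadData) (X : C), Hom (F M X) (F (F M) X)) : Prop :=
  (forall M, is_monad M -> is_monad (F M)) /\
  (forall M T s, is_monad M -> is_monad T -> is_monad_morphism M T s ->
     is_monad_morphism (F M) (F T) (Fmor M T s)) /\
  (forall M, is_monad M -> forall X, Fmor M M (fun Y => idm (M Y)) X = idm (F M X)) /\
  (forall M T U s t, is_monad M -> is_monad T -> is_monad U ->
     is_monad_morphism M T s -> is_monad_morphism T U t ->
     forall X, Fmor M U (fun Y => t Y \o s Y) X = Fmor T U t X \o Fmor M T s X) /\
  (forall M, is_monad M -> is_monad_morphism (F M) M (eps M)) /\
  (forall M, is_monad M -> is_monad_morphism (F M) (F (F M)) (delta M)) /\
  (forall M T s, is_monad M -> is_monad T -> is_monad_morphism M T s ->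
     forall X, s X \o eps M X = eps T X \o Fmor M T s X) /\
  (forall M T s, is_monad M -> is_monad T -> is_monad_morphism M T s ->
     forall X, Fmor (F M) (F T) (Fmor M T s) X \o delta M X = delta T X \o Fmor M T s X) /\
  (forall M, is_monad M -> forall X, eps (F M) X \o delta M X = idm (F M X)) /\
  (forall M, is_monad M -> forall X, Fmor (F M) M (eps M) X \o delta M X = idm (F M X)) /\
  (forall M, is_monad M -> forall X,
     delta (F M) X \o delta M X = Fmor (F M) (F (F M)) (delta M) X \o delta M X).

Definition semifree (M : MonadData) : MonadData := {|
  mobj := fun X => cp K X (M X);
  mmap := fun X Y f => cpmap f (mmap M f);
  munit := fun X => cinl K X (M X);
  mmult := fun X =>
    copair K (idm (cp K X (M X)))
      (cinr K X (M X) \o mmult M X \o mmap M (copair K (munit M X) (idm (M X))))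
|}.

Definition semifree_mor (M T : MonadData) (s : forall X : C, Hom (M X) (T X))
  (X : C) : Hom (semifree M X) (semifree T X) := cpmap (idm X) (s X).

Definition sf_eps (M : MonadData) (X : C) : Hom (semifree M X) (M X) :=
  copair K (munit M X) (idm (M X)).

Definition sf_delta (M : MonadData) (X : C) : Hom (semifree M X) (semifree (semifree M) X) :=
  cpmap (idm X) (cinr K X (M X)).

End Mon.

(** Every structure map is assembled from coproduct injections and copairings,
    so each equation can be checked separately on the two summands of
    [X + M X].  On the [X] summand every map is an injection.  On the [M X]
    summand the multiplication of [M^s] is [inr \o mu \o M eps], and the laws
    reduce to those of [M] together with three facts about [eps]: it respects
    multiplication ([eps \o mu^s = mu \o M eps \o eps]), which is exactly
    associativity of [M^s]; it is natural in the monad, which makes [sigma^s]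
    respect multiplication; and [eps_{M^s} \o delta = id], which makes [delta]
    respect multiplication.  The comonad laws themselves hold for arbitrary
    monad data: they are identities between maps of the form [id + g]. *)

Set Implicit Arguments.
Unset Strict Implicit.

#[local] Arguments mmap {C} m {X Y} _.
#[local] Arguments cpmap {C} K {A B A' B'} _ _.

Section Categories.
Variable C : Category.

Lemma comp_assocr (A B B' D : C) (h : Hom B' D) (g : Hom B B') (f : Hom A B) :
  h \o g \o f = h \o (g \o f).
Proof. symmetry; apply comp_assoc. Qed.

Lemma comp_eq_r (A B B' D W : C) (a : Hom B D) (b : Hom A B) (c : Hom B' D)
    (d : Hom A B') (E : a \o b = c \o d) (x : Hom W A) :
  a \o (b \o x) = c \o (d \o x).
Proof. rewrite !comp_assoc, E; reflexivity. Qed.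

Lemma comp_eq_id_r (A B W : C) (a : Hom B A) (b : Hom A B) (E : a \o b = idm A)
    (x : Hom W A) :
  a \o (b \o x) = x.
Proof. rewrite comp_assoc, E, comp_id_l; reflexivity. Qed.

Lemma hom_ext_comp (A B : C) (f g : Hom A B) :
  (forall W (x : Hom W A), f \o x = g \o x) -> f = g.
Proof. intros E; rewrite <- (comp_id_r _ _ _ f), <- (comp_id_r _ _ _ g); apply E. Qed.

End Categories.

Section Coproducts.
Variable C : Category.
Variable K : FinCoproducts C.

Lemma coprod_ext (A B Z : C) (h k : Hom (cp K A B) Z) :
  (forall W (x : Hom W A), h \o (cinl K A B \o x) = k \o (cinl K A B \o x)) ->
  (forall W (y : Hom W B), h \o (cinr K A B \o y) = k \o (cinr K A B \o y)) ->
  h = k.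
Proof.
  intros El Er.
  specialize (El A (idm A)); specialize (Er B (idm B)); rewrite !comp_id_r in El, Er.
  rewrite (copair_unique K _ _ _ h eq_refl eq_refl), (copair_unique K _ _ _ k eq_refl eq_refl).
  rewrite El, Er; reflexivity.
Qed.

Lemma copair_inl_comp (A B Z W : C) (f : Hom A Z) (g : Hom B Z) (x : Hom W A) :
  copair K f g \o (cinl K A B \o x) = f \o x.
Proof. rewrite comp_assoc, copair_inl; reflexivity. Qed.

Lemma copair_inr_comp (A B Z W : C) (f : Hom A Z) (g : Hom B Z) (y : Hom W B) :
  copair K f g \o (cinr K A B \o y) = g \o y.
Proof. rewrite comp_assoc, copair_inr; reflexivity. Qed.

Lemma cpmap_inl (A B A' B' W : C) (f : Hom A A') (g : Hom B B') (x : Hom W A) :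
  cpmap K f g \o (cinl K A B \o x) = cinl K A' B' \o (f \o x).
Proof. unfold cpmap; rewrite copair_inl_comp, comp_assocr; reflexivity. Qed.

Lemma cpmap_inr (A B A' B' W : C) (f : Hom A A') (g : Hom B B') (y : Hom W B) :
  cpmap K f g \o (cinr K A B \o y) = cinr K A' B' \o (g \o y).
Proof. unfold cpmap; rewrite copair_inr_comp, comp_assocr; reflexivity. Qed.

End Coproducts.

Section MonadLaws.
Variable C : Category.
Variable M : MonadData C.
Hypothesis HM : is_monad M.

Lemma mmap_idm (X : C) : mmap M (idm X) = idm (M X).
Proof. apply HM. Qed.

Lemma mmap_comp (X Y Z : C) (f : Hom X Y) (g : Hom Y Z) :
  mmap M (g \o f) = mmap M g \o mmap M f.
Proof. apply HM. Qed.

Lemma munit_natural (X Y : C) (f : Hom X Y) :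
  mmap M f \o munit M X = munit M Y \o f.
Proof. apply HM. Qed.

Lemma mmult_natural (X Y : C) (f : Hom X Y) :
  mmap M f \o mmult M X = mmult M Y \o mmap M (mmap M f).
Proof. apply HM. Qed.

Lemma mmult_munit (X : C) : mmult M X \o munit M (M X) = idm (M X).
Proof. apply HM. Qed.

Lemma mmult_mmap_munit (X : C) : mmult M X \o mmap M (munit M X) = idm (M X).
Proof. apply HM. Qed.

Lemma mmult_assoc (X : C) :
  mmult M X \o mmult M (M X) = mmult M X \o mmap M (mmult M X).
Proof. apply HM. Qed.

Lemma mmap_comp_eq (X Y Y' Z : C) (f : Hom X Y) (g : Hom Y Z) (h : Hom X Y')
    (k : Hom Y' Z) :
  g \o f = k \o h -> mmap M g \o mmap M f = mmap M k \o mmap M h.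
Proof. intros E; rewrite <- !mmap_comp, E; reflexivity. Qed.

Lemma mmap_comp_r (W X Y Z : C) (f : Hom X Y) (g : Hom Y Z) (x : Hom W (M X)) :
  mmap M g \o (mmap M f \o x) = mmap M (g \o f) \o x.
Proof. rewrite mmap_comp; apply comp_assoc. Qed.

End MonadLaws.

Section MonadMorphismLaws.
Variable C : Category.
Variables M T : MonadData C.
Variable s : forall X : C, Hom (M X) (T X).
Hypothesis Hs : is_monad_morphism M T s.

Lemma monad_morphism_natural (X Y : C) (f : Hom X Y) :
  mmap T f \o s X = s Y \o mmap M f.
Proof. apply Hs. Qed.

Lemma monad_morphism_munit (X : C) : s X \o munit M X = munit T X.
Proof. apply Hs. Qed.

Lemma monad_morphism_mmult (X : C) :
  s X \o mmult M X = mmult T X \o (mmap T (s X) \o s (M X)).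
Proof. apply Hs. Qed.

End MonadMorphismLaws.

(* The computation rules carry a trailing [\o x], so that they rewrite inside
   right-associated composites; [semifree_ext] is [coprod_ext] at the type
   [Hom (semifree K M X) Z], so that the composites it produces match the
   rules syntactically. *)
Section SemifreeComputation.
Variable C : Category.
Variable K : FinCoproducts C.
Variables M T : MonadData C.

Lemma semifree_ext (X Z : C) (h k : Hom (semifree K M X) Z) :
  (forall W (x : Hom W X), h \o (cinl K X (M X) \o x) = k \o (cinl K X (M X) \o x)) ->
  (forall W (y : Hom W (M X)), h \o (cinr K X (M X) \o y) = k \o (cinr K X (M X) \o y)) ->
  h = k.
Proof. apply coprod_ext. Qed.

Lemma semifree_mmap_inl (X Y W : C) (f : Hom X Y) (x : Hom W X) :
  mmap (semifree K M) f \o (cinl K X (M X) \o x) = cinl K Y (M Y) \o (f \o x).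
Proof. apply cpmap_inl. Qed.

Lemma semifree_mmap_inr (X Y W : C) (f : Hom X Y) (y : Hom W (M X)) :
  mmap (semifree K M) f \o (cinr K X (M X) \o y) = cinr K Y (M Y) \o (mmap M f \o y).
Proof. apply cpmap_inr. Qed.

Lemma semifree_mmult_inl (X W : C) (x : Hom W (semifree K M X)) :
  mmult (semifree K M) X \o (cinl K (semifree K M X) (M (semifree K M X)) \o x) = x.
Proof. etransitivity; [apply copair_inl_comp | apply comp_id_l]. Qed.

Lemma semifree_mmult_inr (X W : C) (y : Hom W (M (semifree K M X))) :
  mmult (semifree K M) X \o (cinr K (semifree K M X) (M (semifree K M X)) \o y)
  = cinr K X (M X) \o (mmult M X \o (mmap M (sf_eps K M X) \o y)).
Proof. etransitivity; [apply copair_inr_comp | rewrite !comp_assocr; reflexivity]. Qed.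

Lemma sf_eps_cinl (X : C) : sf_eps K M X \o cinl K X (M X) = munit M X.
Proof. apply copair_inl. Qed.

Lemma sf_eps_inl (X W : C) (x : Hom W X) :
  sf_eps K M X \o (cinl K X (M X) \o x) = munit M X \o x.
Proof. apply copair_inl_comp. Qed.

Lemma sf_eps_inr (X W : C) (y : Hom W (M X)) :
  sf_eps K M X \o (cinr K X (M X) \o y) = y.
Proof. etransitivity; [apply copair_inr_comp | apply comp_id_l]. Qed.

Lemma sf_delta_inl (X W : C) (x : Hom W X) :
  sf_delta K M X \o (cinl K X (M X) \o x) = cinl K X (semifree K M X) \o x.
Proof. etransitivity; [apply cpmap_inl | rewrite comp_id_l; reflexivity]. Qed.

Lemma sf_delta_inr (X W : C) (y : Hom W (M X)) :
  sf_delta K M X \o (cinr K X (M X) \o y)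
  = cinr K X (semifree K M X) \o (cinr K X (M X) \o y).
Proof. apply cpmap_inr. Qed.

Lemma semifree_mor_inl (s : forall X, Hom (M X) (T X)) (X W : C) (x : Hom W X) :
  semifree_mor K M T s X \o (cinl K X (M X) \o x) = cinl K X (T X) \o x.
Proof. etransitivity; [apply cpmap_inl | rewrite comp_id_l; reflexivity]. Qed.

Lemma semifree_mor_inr (s : forall X, Hom (M X) (T X)) (X W : C) (y : Hom W (M X)) :
  semifree_mor K M T s X \o (cinr K X (M X) \o y) = cinr K X (T X) \o (s X \o y).
Proof. apply cpmap_inr. Qed.

End SemifreeComputation.

Ltac semifree_simpl :=
  repeat rewrite ?comp_assocr, ?comp_id_l, ?comp_id_r,
    ?semifree_mmap_inl, ?semifree_mmap_inr, ?semifree_mmult_inl, ?semifree_mmult_inr,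
    ?sf_eps_inl, ?sf_eps_inr, ?sf_delta_inl, ?sf_delta_inr,
    ?semifree_mor_inl, ?semifree_mor_inr.

Ltac semifree_cases :=
  first [ apply semifree_ext | apply hom_ext_comp ]; intros ? ?; semifree_simpl;
  try reflexivity.

Section Semifree.
Variable C : Category.
Variable K : FinCoproducts C.

Lemma sf_eps_natural (M : MonadData C) (HM : is_monad M) (X Y : C) (f : Hom X Y) :
  mmap M f \o sf_eps K M X = sf_eps K M Y \o mmap (semifree K M) f.
Proof. semifree_cases. apply (comp_eq_r (munit_natural HM f)). Qed.

Lemma sf_eps_mmult (M : MonadData C) (HM : is_monad M) (X : C) :
  sf_eps K M X \o mmult (semifree K M) X
  = mmult M X \o (mmap M (sf_eps K M X) \o sf_eps K M (semifree K M X)).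
Proof.
  semifree_cases.
  rewrite (comp_eq_r (munit_natural HM _)), (comp_eq_id_r (mmult_munit HM _)).
  reflexivity.
Qed.

Lemma sf_eps_is_monad_morphism (M : MonadData C) (HM : is_monad M) :
  is_monad_morphism (semifree K M) M (sf_eps K M).
Proof.
  split; [|split]; intros.
  - apply (sf_eps_natural HM).
  - semifree_cases.
  - apply (sf_eps_mmult HM).
Qed.

Lemma semifree_mmult_assoc (M : MonadData C) (HM : is_monad M) (X : C) :
  mmult (semifree K M) X \o mmult (semifree K M) (semifree K M X)
  = mmult (semifree K M) X \o mmap (semifree K M) (mmult (semifree K M) X).
Proof.
  semifree_cases.
  rewrite (comp_eq_r (mmult_natural HM _)), (comp_eq_r (mmult_assoc HM X)).
  rewrite (comp_eq_r (mmap_comp_eq HM (sf_eps_mmult HM X))), (mmap_comp HM), comp_assocr.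
  reflexivity.
Qed.

Lemma semifree_is_monad (M : MonadData C) (HM : is_monad M) :
  is_monad (semifree K M).
Proof.
  split; [|split; [|split; [|split; [|split; [|split]]]]]; intros.
  - semifree_cases; rewrite (mmap_idm HM), comp_id_l; reflexivity.
  - semifree_cases; rewrite (mmap_comp HM), comp_assocr; reflexivity.
  - semifree_cases.
  - semifree_cases.
    rewrite (comp_eq_r (mmult_natural HM f)), (comp_eq_r (mmap_comp_eq HM (sf_eps_natural HM f))).
    reflexivity.
  - semifree_cases.
  - semifree_cases.
    rewrite (mmap_comp_r HM), sf_eps_cinl, (comp_eq_id_r (mmult_mmap_munit HM X)).
    reflexivity.
  - apply semifree_mmult_assoc, HM.
Qed.

Lemma semifree_mor_idm (M : MonadData C) (X : C) :
  semifree_mor K M M (fun Y => idm (M Y)) X = idm (semifree K M X).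
Proof. semifree_cases. Qed.

Lemma semifree_mor_comp (M T U : MonadData C) (s : forall X, Hom (M X) (T X))
    (t : forall X, Hom (T X) (U X)) (X : C) :
  semifree_mor K M U (fun Y => t Y \o s Y) X
  = semifree_mor K T U t X \o semifree_mor K M T s X.
Proof. semifree_cases. Qed.

Lemma sf_eps_semifree_mor (M T : MonadData C) (s : forall X, Hom (M X) (T X))
    (Hs_unit : forall X, s X \o munit M X = munit T X) (X : C) :
  s X \o sf_eps K M X = sf_eps K T X \o semifree_mor K M T s X.
Proof. semifree_cases. rewrite comp_assoc, Hs_unit; reflexivity. Qed.

Lemma sf_delta_semifree_mor (M T : MonadData C) (s : forall X, Hom (M X) (T X)) (X : C) :
  semifree_mor K (semifree K M) (semifree K T) (semifree_mor K M T s) X \o sf_delta K M X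
  = sf_delta K T X \o semifree_mor K M T s X.
Proof. semifree_cases. Qed.

Lemma sf_eps_sf_delta (M : MonadData C) (X : C) :
  sf_eps K (semifree K M) X \o sf_delta K M X = idm (semifree K M X).
Proof. semifree_cases. Qed.

Lemma semifree_mor_sf_eps_sf_delta (M : MonadData C) (X : C) :
  semifree_mor K (semifree K M) M (sf_eps K M) X \o sf_delta K M X = idm (semifree K M X).
Proof. semifree_cases. Qed.

Lemma sf_delta_coassoc (M : MonadData C) (X : C) :
  sf_delta K (semifree K M) X \o sf_delta K M X
  = semifree_mor K (semifree K M) (semifree K (semifree K M)) (sf_delta K M) X
    \o sf_delta K M X.
Proof. semifree_cases. Qed.

Lemma sf_delta_is_monad_morphism (M : MonadData C) (HM : is_monad M) :
  is_monad_morphism (semifree K M) (semifree K (semifree K M)) (sf_delta K M).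
Proof.
  split; [|split]; intros; semifree_cases.
  rewrite (mmap_comp_r HM (sf_delta K M X)), sf_eps_sf_delta, (mmap_idm HM), comp_id_l.
  reflexivity.
Qed.

Lemma semifree_mor_is_monad_morphism (M T : MonadData C) (s : forall X, Hom (M X) (T X))
    (HT : is_monad T) (Hs : is_monad_morphism M T s) :
  is_monad_morphism (semifree K M) (semifree K T) (semifree_mor K M T s).
Proof.
  split; [|split]; intros; semifree_cases.
  - rewrite (comp_eq_r (monad_morphism_natural Hs f)); reflexivity.
  - rewrite (comp_eq_r (monad_morphism_mmult Hs X)), !comp_assocr.
    rewrite <- (comp_eq_r (monad_morphism_natural Hs (sf_eps K M X))).
    rewrite (comp_eq_r (mmap_comp_eq HT (sf_eps_semifree_mor (monad_morphism_munit Hs) X))).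
    reflexivity.
Qed.

End Semifree.

Theorem lemma19 (C : Category) (K : FinCoproducts C) :
  is_Mon_comonad (semifree K) (semifree_mor K) (sf_eps K) (sf_delta K).
Proof.
  unfold is_Mon_comonad; repeat match goal with |- _ /\ _ => split end.
  - intros M HM; exact (semifree_is_monad K HM).
  - intros M T s _ HT Hs; exact (semifree_mor_is_monad_morphism K HT Hs).
  - intros M _ X; apply semifree_mor_idm.
  - intros M T U s t _ _ _ _ _ X; apply semifree_mor_comp.
  - intros M HM; exact (sf_eps_is_monad_morphism K HM).
  - intros M HM; exact (sf_delta_is_monad_morphism K HM).
  - intros M T s _ _ Hs X; exact (sf_eps_semifree_mor K (monad_morphism_munit Hs) X).
  - intros M T s _ _ _ X; apply sf_delta_semifree_mor.
  - intros M _ X; apply sf_eps_sf_delta.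
  - intros M _ X; apply semifree_mor_sf_eps_sf_delta.
  - intros M _ X; apply sf_delta_coassoc.
Qed.
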